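(* Let $M\ge 1$ be an integer and let $H>0$, $D>0$, $x\in\mathbb{R}$, $\beta_0>0$, $\sigma^2>0$, $P_{\max}>0$, $\tilde{\Gamma}>0$, $\lambda>0$. Let $\bm{a}_u=\bm{a}(x,\bm{u})\in\mathbb{C}^M$ and $\bm{a}_v=\bm{a}(x,\bm{v})\in\mathbb{C}^M$ be the transmit array response vectors toward the user and the target, let $\bm{h}_c=\sqrt{\tfrac{\beta_0}{x^2+H^2}}\,e^{j\phi}\,\bm{a}_u$ for a real phase $\phi$, and consider the problem $$\max_{\bm{w}\in\mathbb{C}^M}\ \frac{|\bm{h}_c^H\bm{w}|^2}{\sigma^2}\quad\text{s.t.}\quad \frac{|\bm{a}_v^H\bm{w}|^2}{(D-x)^2+H^2}\ge\tilde{\Gamma},\qquad \|\bm{w}\|^2\le P_{\max}.$$ Assume this problem is feasible, i.e. $\frac{MP_{\max}}{(D-x)^2+H^2}\ge\tilde{\Gamma}$. Set $\gamma_0=\beta_0/\sigma^2$ and $\rho=\frac{|\bm{a}_u^H\bm{a}_v|}{\|\bm{a}_u\|\,\|\bm{a}_v\|}$. Then the optimal value $\gamma^*$ of the problem is $$\gamma^*=\begin{cases}\dfrac{\gamma_0 P_{\max}M}{x^2+H^2}, & \text{if } \dfrac{MP_{\max}\rho^2}{(D-x)^2+H^2}\ge\tilde{\Gamma},\\[2ex] g(x), & \text{otherwise,}\end{cases}$$ where $$g(x)=\frac{\gamma_0\big((D-x)^2+H^2\big)\left(\rho\sqrt{\tilde{\Gamma}}+\sqrt{1-\rho^2}\s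qrt{\dfrac{MP_{\max}}{(D-x)^2+H^2}-\tilde{\Gamma}}\right)^2}{x^2+H^2}.$$
   Context: Setting: a UAV with a uniform linear array of $M$ antennas (half-wavelength spacing $d=\lambda/2$) is at horizontal position $x$ and altitude $H$; a single-antenna user is at ground point $\bm{u}=(0,0)$ and a sensing target at ground point $\bm{v}=(D,0)$. The array response vector toward a ground point $\bm{p}$ is $\bm{a}(x,\bm{p})=[1,e^{j\pi\sin\theta},\dots,e^{j\pi(M-1)\sin\theta}]^T$, where $\theta$ is the elevation angle of the path from the UAV to $\bm{p}$; for the user $\sin\theta=H/\sqrt{x^2+H^2}$ and for the target $\sin\theta=H/\sqrt{(D-x)^2+H^2}$. Thus $\|\bm{a}_u\|^2=\|\bm{a}_v\|^2=M$. The channel to the user is line-of-sight with power gain $\beta_0/(x^2+H^2)$ ($\beta_0$ = reference channel power at 1 m), with the phase factor $e^{-j2\pi\sqrt{x^2+H^2}/\lambda}$. The objective is the user SNR with precoder $\bm{w}$ and noise power $\sigma^2$; the first constraint requires the transmit beam pattern gain $|\bm{a}_v^H\bm{w}|^2$ toward the target to be at least $((D-x)^2+H^2)\tilde{\Gamma}$; the second is a transmit power budget. *)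

From HB Require Import structures.
From mathcomp Require Import all_boot all_order all_algebra.
From mathcomp Require Import complex.
From mathcomp Require Import reals trigo.
Set Implicit Arguments. Unset Strict Implicit. Unset Printing Implicit Defensive.
Import Order.TTheory GRing.Theory Num.Theory.
Local Open Scope ring_scope.

Section Defs.
Variable R : realType.
Local Notation C := R[i].

Definition expj (t : R) : C := Complex (cos t) (sin t).

Definition cabs2 (z : C) : R := let: Complex a b := z in a ^+ 2 + b ^+ 2.

Definition cconj (z : C) : C := let: Complex a b := z in Complex a (- b).

Definition dotH (M : nat) (a w : 'cV[C]_M) : C :=
  \sum_(i < M) cconj (a i 0) * w i 0.

Definition vnorm2 (M : nat) (w : 'cV[C]_M) : R := \sum_(i < M) cabs2 (w i 0).

(* ULA response vector with half-wavelength spacing, sin(theta) = s *)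
Definition steer (M : nat) (s : R) : 'cV[C]_M :=
  \col_(m < M) expj (pi * m%:R * s).

(* user at (0,0), target at (D,0), UAV at horizontal position x, altitude H *)
Definition a_u (M : nat) (x H : R) : 'cV[C]_M :=
  steer M (H / Num.sqrt (x ^+ 2 + H ^+ 2)).
Definition a_v (M : nat) (x H D : R) : 'cV[C]_M :=
  steer M (H / Num.sqrt ((D - x) ^+ 2 + H ^+ 2)).

Definition h_c (M : nat) (x H beta0 phi : R) : 'cV[C]_M :=
  (Complex (Num.sqrt (beta0 / (x ^+ 2 + H ^+ 2))) 0 * expj phi) *: a_u M x H.

Definition rho (M : nat) (x H D : R) : R :=
  Num.sqrt (cabs2 (dotH (a_u M x H) (a_v M x H D))) /
  (Num.sqrt (vnorm2 (a_u M x H)) * Num.sqrt (vnorm2 (a_v M x H D))).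

Definition snr (M : nat) (x H beta0 phi sigma2 : R) (w : 'cV[C]_M) : R :=
  cabs2 (dotH (h_c M x H beta0 phi) w) / sigma2.

Definition feasible (M : nat) (x H D Gam Pmax : R) (w : 'cV[C]_M) : Prop :=
  cabs2 (dotH (a_v M x H D) w) / ((D - x) ^+ 2 + H ^+ 2) >= Gam /\
  vnorm2 w <= Pmax.

Definition gamma_star (M : nat) (x H D beta0 sigma2 Pmax Gam : R) : R :=
  let gamma0 := beta0 / sigma2 in
  let dv := (D - x) ^+ 2 + H ^+ 2 in
  let du := x ^+ 2 + H ^+ 2 in
  let r := rho M x H D in
  if M%:R * Pmax * r ^+ 2 / dv >= Gam then gamma0 * Pmax * M%:R / du
  else gamma0 * dv *
       (r * Num.sqrt Gam + Num.sqrt (1 - r ^+ 2) *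
          Num.sqrt (M%:R * Pmax / dv - Gam)) ^+ 2 / du.

End Defs.

(* Let u = a_u, v = a_v, so ||u||^2 = ||v||^2 = M, and let k = v^H u, rho = |k| / M.
   Splitting u and w into their components along v and orthogonal to v, Cauchy-Schwarz
   on the orthogonal parts gives, with q = |v^H w|,
     |u^H w| <= rho q + sqrt(1 - rho^2) sqrt(M ||w||^2 - q^2).
   As a function of q on the circle q^2 + t^2 = M P_max, the right-hand side peaks at
   q = rho sqrt(M P_max), with value sqrt(M P_max).  If this q meets the sensing
   constraint, maximum-ratio transmission w ~ u is optimal; otherwise the bound decreases
   on the feasible range and is maximal on the boundary q^2 = Gamma ((D-x)^2 + H^2), where
   it is attained by a beam mixing v with the part of u orthogonal to v. *)

From HB Require Import structures.
From mathcomp Require Import all_boot all_order all_algebra.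
From mathcomp Require Import complex.
From mathcomp Require Import reals trigo.
From mathcomp Require Import ring lra.
Set Implicit Arguments. Unset Strict Implicit. Unset Printing Implicit Defensive.
Import Order.TTheory GRing.Theory Num.Theory.
Local Open Scope complex_scope.
Local Open Scope ring_scope.

Local Notation modc z := (Num.sqrt (cabs2 z)).

Section ComplexModulus.
Variable R : realType.
Local Notation C := R[i].

Lemma cconjE (z : C) : cconj z = z^*%C.
Proof. by case: z. Qed.

Lemma cabs2E (z : C) : (cabs2 z)%:C = z * z^*%C.
Proof.
by case: z => a b; apply/eqP; rewrite eq_complex /=; apply/andP; split; apply/eqP; ring.
Qed.

Lemma cabs2_ge0 (z : C) : 0 <= cabs2 z.
Proof. by case: z => a b; rewrite addr_ge0 ?sqr_ge0. Qed.

Lemma sqr_modc (z : C) : modc z ^+ 2 = cabs2 z.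
Proof. by rewrite sqr_sqrtr ?cabs2_ge0. Qed.

Lemma cabs2_eq0 (z : C) : (cabs2 z == 0) = (z == 0).
Proof. by rewrite -(inj_eq (@complexI R)) cabs2E mulf_eq0 conjc_eq0 orbb. Qed.

Lemma cabs2M (a b : C) : cabs2 (a * b) = cabs2 a * cabs2 b.
Proof. by apply: complexI; rewrite rmorphM /= !cabs2E rmorphM /=; ring. Qed.

Lemma cabs2J (a : C) : cabs2 a^*%C = cabs2 a.
Proof. by apply: complexI; rewrite !cabs2E conjcK mulrC. Qed.

Lemma cabs2R (a : R) : cabs2 a%:C = a ^+ 2.
Proof. by rewrite /= expr0n addr0. Qed.

Lemma cabs2_expj (t : R) : cabs2 (expj t) = 1.
Proof. exact: cos2Dsin2. Qed.

Lemma modcD (a b : C) : modc (a + b) <= modc a + modc b.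
Proof.
have normcE (z : C) : Normc.normc z = modc z by case: z.
by rewrite -!normcE le_normcD.
Qed.

Lemma modcM (a b : C) : modc (a * b) = modc a * modc b.
Proof. by rewrite cabs2M sqrtrM ?cabs2_ge0. Qed.

Lemma unit_phase (z : C) : exists e : C, cabs2 e = 1 /\ e * z^*%C = (modc z)%:C.
Proof.
have [-> | z_neq0] := eqVneq z 0.
  by exists 1; rewrite conjc0 mulr0 !cabs2R expr1n expr0n sqrtr0.
have m_neq0 : modc z != 0.
  by rewrite sqrtr_eq0 -ltNge lt_def cabs2_eq0 z_neq0 cabs2_ge0.
exists (z * (modc z)^-1%:C); split.
  by rewrite cabs2M cabs2R exprVn sqr_modc mulfV // -sqr_modc expf_neq0.
by rewrite mulrAC -cabs2E -rmorphM -{1}sqr_modc expr2 mulfK.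
Qed.

End ComplexModulus.

Section HermitianProduct.
Variables (R : realType) (M : nat).
Local Notation C := R[i].
Implicit Types (a b w : 'cV[C]_M) (c : C).

Lemma dotHDr a w1 w2 : dotH a (w1 + w2) = dotH a w1 + dotH a w2.
Proof. by rewrite /dotH -big_split; apply: eq_bigr => i _; rewrite !mxE mulrDr. Qed.

Lemma dotHDl a1 a2 w : dotH (a1 + a2) w = dotH a1 w + dotH a2 w.
Proof.
by rewrite /dotH -big_split; apply: eq_bigr => i _; rewrite !mxE !cconjE rmorphD mulrDl.
Qed.

Lemma dotHZr a c w : dotH a (c *: w) = c * dotH a w.
Proof. by rewrite /dotH mulr_sumr; apply: eq_bigr => i _; rewrite !mxE mulrCA. Qed.

Lemma dotHZl a c w : dotH (c *: a) w = c^*%C * dotH a w.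
Proof.
by rewrite /dotH mulr_sumr; apply: eq_bigr => i _; rewrite !mxE !cconjE rmorphM mulrA.
Qed.

Lemma dotHBr a w1 w2 : dotH a (w1 - w2) = dotH a w1 - dotH a w2.
Proof. by rewrite dotHDr -scaleN1r dotHZr mulN1r. Qed.

Lemma dotHBl a1 a2 w : dotH (a1 - a2) w = dotH a1 w - dotH a2 w.
Proof. by rewrite dotHDl -scaleN1r dotHZl rmorphN1 mulN1r. Qed.

Lemma dotHJ a w : (dotH a w)^*%C = dotH w a.
Proof.
rewrite /dotH rmorph_sum; apply: eq_bigr => i _.
by rewrite !cconjE rmorphM /= conjcK mulrC.
Qed.

Lemma vnorm2E w : (vnorm2 w)%:C = dotH w w.
Proof.
rewrite /vnorm2 rmorph_sum; apply: eq_bigr => i _.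
by rewrite cconjE mulrC; exact: cabs2E.
Qed.

Lemma vnorm2_ge0 w : 0 <= vnorm2 w.
Proof. by apply: sumr_ge0 => i _; apply: cabs2_ge0. Qed.

Lemma vnorm2Z c w : vnorm2 (c *: w) = cabs2 c * vnorm2 w.
Proof. by apply: complexI; rewrite rmorphM /= !vnorm2E dotHZl dotHZr cabs2E mulrCA mulrA. Qed.

Lemma vnorm2_orthD a b : dotH a b = 0 -> vnorm2 (a + b) = vnorm2 a + vnorm2 b.
Proof.
move=> ab0; apply: complexI; rewrite rmorphD /= !vnorm2E dotHDl !dotHDr -(dotHJ a b) ab0.
by rewrite conjc0 addr0 add0r.
Qed.

Lemma cauchy_schwarz a w : cabs2 (dotH a w) <= vnorm2 a * vnorm2 w.
Proof.
set X := vnorm2 a; set d := dotH a w.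
have expand : vnorm2 (X%:C *: w - d *: a) = X * (X * vnorm2 w - cabs2 d).
  apply: complexI; rewrite vnorm2E dotHBl !dotHBr !dotHZl !dotHZr -(dotHJ a w) -/d.
  rewrite -!vnorm2E -/X !(rmorphB, rmorphM) /= cabs2E oppr0 complexr0; ring.
have [X0 | X_neq0] := eqVneq X 0.
  have a0 i : a i 0 = 0.
    apply/eqP; rewrite -cabs2_eq0; apply/eqP.
    exact: (psumr_eq0P (fun i _ => cabs2_ge0 (a i 0)) X0).
  suff -> : d = 0 by rewrite X0 mul0r /= expr0n addr0.
  by rewrite /d /dotH big1 // => i _; rewrite a0 cconjE conjc0 mul0r.
have X_gt0 : 0 < X by rewrite lt_def X_neq0 vnorm2_ge0.
by rewrite -subr_ge0 -(pmulr_rge0 _ X_gt0) -expand vnorm2_ge0.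
Qed.

End HermitianProduct.

Lemma lin_circle_nonincreasing (R : rcfType) (r s T x y : R) :
  0 <= r -> 0 <= s -> r ^+ 2 + s ^+ 2 = 1 -> r ^+ 2 * T <= x ^+ 2 ->
  0 <= x -> x <= y -> y ^+ 2 <= T ->
  r * y + s * Num.sqrt (T - y ^+ 2) <= r * x + s * Num.sqrt (T - x ^+ 2).
Proof.
move=> r0 s0 rs1 rxT x0 xy yT.
have a0 := sqrtr_ge0 (T - x ^+ 2); have b0 := sqrtr_ge0 (T - y ^+ 2).
set a := Num.sqrt (T - x ^+ 2) in a0 *; set b := Num.sqrt (T - y ^+ 2) in b0 *.
have a2 : a ^+ 2 = T - x ^+ 2 by rewrite sqr_sqrtr // subr_ge0; nra.
have b2 : b ^+ 2 = T - y ^+ 2 by rewrite sqr_sqrtr // subr_ge0.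
have ra : r * a <= s * x.
  rewrite -ler_sqr ?nnegrE ?mulr_ge0 // !exprMn a2; nra.
have rb : r * b <= s * y.
  rewrite -ler_sqr ?nnegrE ?mulr_ge0 //; try lra.
  rewrite !exprMn b2; nra.
have key : r * (y - x) * (a + b) <= s * (a - b) * (a + b).
  have -> : s * (a - b) * (a + b) = s * (y - x) * (y + x)
    by rewrite -[LHS]mulrA -subr_sqr a2 b2; ring.
  rewrite -subr_ge0.
  have -> : s * (y - x) * (y + x) - r * (y - x) * (a + b)
          = (y - x) * (s * y + s * x - (r * a + r * b)) by ring.
  apply: mulr_ge0; lra.
have [ab0|ab_gt0] := eqVneq (a + b) 0.
  have xy2 : x ^+ 2 = y ^+ 2 by nra.
  have -> : y = x by nra.
  nra.
have ab_gt0' : 0 < a + b by rewrite lt_def ab_gt0; lra.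
rewrite ler_pM2r // in key; lra.
Qed.

Definition beam_gain (R : rcfType) (N P G r : R) : R :=
  if G <= N * P * r ^+ 2 then N * P
  else (r * Num.sqrt G + Num.sqrt (1 - r ^+ 2) * Num.sqrt (N * P - G)) ^+ 2.

Section TwoEqualNormVectors.
Variables (R : realType) (M : nat) (u v : 'cV[R[i]]_M) (N : R).
Hypotheses (N_gt0 : 0 < N) (u_norm : vnorm2 u = N) (v_norm : vnorm2 v = N).
Local Notation k := (dotH v u).
Local Notation r := (modc k / N).

Lemma dotH_uu : dotH u u = N%:C. Proof. by rewrite -vnorm2E u_norm. Qed.
Lemma dotH_vv : dotH v v = N%:C. Proof. by rewrite -vnorm2E v_norm. Qed.

Lemma cabs2_corr_le : cabs2 k <= N ^+ 2.
Proof. by rewrite expr2 -{1}v_norm -u_norm cauchy_schwarz. Qed.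

Lemma sqrt1_sub_sqr_corr : Num.sqrt (1 - r ^+ 2) = Num.sqrt (N ^+ 2 - cabs2 k) / N.
Proof.
have -> : 1 - r ^+ 2 = (N ^+ 2 - cabs2 k) / N ^+ 2.
  by rewrite expr_div_n sqr_modc; field; rewrite gt_eqF.
rewrite sqrtrM ?subr_ge0 ?cabs2_corr_le // sqrtrV ?sqr_ge0 //.
by rewrite sqrtr_sqr gtr0_norm.
Qed.

Local Notation perp w := (N%:C *: w - dotH v w *: v).

Lemma dotH_v_perp w : dotH v (perp w) = 0.
Proof. by rewrite dotHBr !dotHZr dotH_vv mulrC subrr. Qed.

Lemma dotH_perp a b :
  dotH (perp a) (perp b) = N%:C * (N%:C * dotH a b - (dotH v a)^*%C * dotH v b).
Proof.
rewrite dotHBl !dotHZl dotH_v_perp mulr0 subr0 conjc_real dotHBr !dotHZr.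
by rewrite -(dotHJ v a) [dotH v b * _]mulrC.
Qed.

Lemma vnorm2_perp w : vnorm2 (perp w) = N * (N * vnorm2 w - cabs2 (dotH v w)).
Proof.
apply: complexI; rewrite vnorm2E dotH_perp -vnorm2E [_^*%C * _]mulrC -cabs2E.
by rewrite !(rmorphM, rmorphB).
Qed.

Lemma dotH_u_perp_u : dotH u (perp u) = (N ^+ 2 - cabs2 k)%:C.
Proof.
rewrite dotHBr !dotHZr dotH_uu -(dotHJ v u) mulrC -cabs2E.
by rewrite rmorphB rmorphXn.
Qed.

Lemma dotH_le_split w :
  N * modc (dotH u w) <=
  modc k * modc (dotH v w) +
  Num.sqrt (N ^+ 2 - cabs2 k) * Num.sqrt (N * vnorm2 w - cabs2 (dotH v w)).
Proof.
set p := dotH u w; set q := dotH v w.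
(* Cauchy-Schwarz on the components orthogonal to v, then the triangle inequality. *)
have K_ge0 : 0 <= N ^+ 2 - cabs2 k by rewrite subr_ge0 cabs2_corr_le.
have W_ge0 : 0 <= N * vnorm2 w - cabs2 q.
  by rewrite -(pmulr_rge0 _ N_gt0) -vnorm2_perp vnorm2_ge0.
have cs : cabs2 (N%:C * p - k^*%C * q) <= (N ^+ 2 - cabs2 k) * (N * vnorm2 w - cabs2 q).
  have := cauchy_schwarz (perp u) (perp w).
  rewrite dotH_perp !vnorm2_perp u_norm -expr2 cabs2M cabs2R mulrACA -expr2.
  by rewrite ler_pM2l // exprn_gt0.
have tri := modcD (N%:C * p - k^*%C * q) (k^*%C * q).
rewrite subrK !modcM cabs2R sqrtr_sqr gtr0_norm // cabs2J in tri.
apply: (le_trans tri); rewrite addrC lerD2l -sqrtrM //.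
by rewrite ler_sqrt // mulr_ge0.
Qed.

Lemma exists_beam x y : cabs2 k < N ^+ 2 ->
  exists w, [/\ cabs2 (dotH v w) = x ^+ 2, vnorm2 w = (x ^+ 2 + y ^+ 2) / N &
    dotH u w = ((modc k * x + Num.sqrt (N ^+ 2 - cabs2 k) * y) / N)%:C].
Proof.
move=> k_lt.
have [e [e1 ek]] := unit_phase k.
set sK := Num.sqrt (N ^+ 2 - cabs2 k).
have sK_gt0 : 0 < sK by rewrite sqrtr_gt0 subr_gt0.
have sK2 : sK ^+ 2 = N ^+ 2 - cabs2 k by rewrite sqr_sqrtr // subr_ge0 ltW.
(* The phase e makes the contribution of the v-component to u^H w real and nonnegative. *)
exists (((x / N)%:C * e) *: v + (y / (N * sK))%:C *: perp u); split.
- rewrite dotHDr !dotHZr dotH_v_perp dotH_vv mulr0 addr0 !cabs2M e1 !cabs2R.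
  by field; rewrite gt_eqF.
- rewrite vnorm2_orthD; last by rewrite dotHZl dotHZr dotH_v_perp !mulr0.
  rewrite !vnorm2Z vnorm2_perp u_norm v_norm -expr2 !cabs2M e1 !cabs2R -sK2.
  by field; rewrite !gt_eqF.
- rewrite dotHDr !dotHZr dotH_u_perp_u -(dotHJ v u) -mulrA ek -!rmorphM -rmorphD -sK2.
  by congr (_%:C); field; rewrite !gt_eqF.
Qed.

Lemma beam_gain_ub P G w : 0 <= G ->
  G <= cabs2 (dotH v w) -> vnorm2 w <= P -> cabs2 (dotH u w) <= beam_gain N P G r.
Proof.
move=> G_ge0 Gq wP.
set p := dotH u w; set q := dotH v w.
have q_le : cabs2 q <= N * P.
  by apply: (le_trans (cauchy_schwarz v w)); rewrite v_norm ler_pM2l.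
rewrite /beam_gain; case: ifP => [_ | /negbT]; last rewrite -ltNge => r_small.
  by apply: (le_trans (cauchy_schwarz u w)); rewrite u_norm ler_pM2l.
have r_ge0 : 0 <= r by rewrite divr_ge0 ?sqrtr_ge0 ?ltW.
have r2_le1 : r ^+ 2 <= 1.
  by rewrite expr_div_n sqr_modc ler_pdivrMr ?exprn_gt0 // mul1r cabs2_corr_le.
set s := Num.sqrt (1 - r ^+ 2).
have s_ge0 : 0 <= s by exact: sqrtr_ge0.
have rs1 : r ^+ 2 + s ^+ 2 = 1 by rewrite sqr_sqrtr ?subr_ge0 // addrC subrK.
have split_le : modc p <= r * modc q + s * Num.sqrt (N * P - modc q ^+ 2).
  rewrite /s sqrt1_sub_sqr_corr sqr_modc mulrAC [X in _ + X]mulrAC -mulrDl.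
  rewrite ler_pdivlMr // [_ * N]mulrC.
  apply: (le_trans (dotH_le_split w)); rewrite lerD2l ler_wpM2l ?sqrtr_ge0 //.
  by rewrite ler_sqrt ?subr_ge0 // lerD2r ler_pM2l.
have lin_le : r * modc q + s * Num.sqrt (N * P - modc q ^+ 2) <=
              r * Num.sqrt G + s * Num.sqrt (N * P - G).
  rewrite -{2}(sqr_sqrtr G_ge0).
  apply: lin_circle_nonincreasing => //; rewrite ?sqrtr_ge0 ?ler_sqrt ?sqr_modc ?cabs2_ge0 //.
  by rewrite sqr_sqrtr // mulrC ltW.
rewrite -[cabs2 p]sqr_modc ler_sqr ?nnegrE ?sqrtr_ge0 //; first exact: le_trans lin_le.
by apply: addr_ge0; apply: mulr_ge0; rewrite ?sqrtr_ge0.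
Qed.

Lemma beam_gain_attained P G : 0 <= G -> G <= N * P ->
  exists w, [/\ G <= cabs2 (dotH v w), vnorm2 w <= P &
                cabs2 (dotH u w) = beam_gain N P G r].
Proof.
move=> G_ge0 G_le.
have P_ge0 : 0 <= P by rewrite -(pmulr_rge0 _ N_gt0); exact: le_trans G_le.
rewrite /beam_gain; case: ifP => [r_large | /negbT]; last rewrite -ltNge => r_small.
  exists ((Num.sqrt (P / N))%:C *: u).
  have PN_ge0 : 0 <= P / N by rewrite divr_ge0 // ltW.
  rewrite !dotHZr dotH_uu vnorm2Z u_norm !cabs2M !cabs2R sqr_sqrtr //.
  split.
  - rewrite [X in _ <= X](_ : _ = N * P * r ^+ 2) //.
    by rewrite expr_div_n sqr_modc; field; rewrite gt_eqF.
  - by rewrite divfK ?gt_eqF.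
  - by field; rewrite gt_eqF.
have k_lt : cabs2 k < N ^+ 2.
  have NP_gt0 : 0 < N * P.
    apply: le_lt_trans (lt_le_trans r_small G_le).
    exact: mulr_ge0 (mulr_ge0 (ltW N_gt0) P_ge0) (sqr_ge0 r).
  have : r ^+ 2 < 1 by rewrite -(ltr_pM2l NP_gt0) mulr1 (lt_le_trans r_small G_le).
  by rewrite expr_div_n sqr_modc ltr_pdivrMr ?exprn_gt0 // mul1r.
have [w [vw wn uw]] := exists_beam (Num.sqrt G) (Num.sqrt (N * P - G)) k_lt.
exists w; split.
- by rewrite vw sqr_sqrtr.
- by rewrite wn !sqr_sqrtr ?subr_ge0 // addrC subrK mulrC mulKf ?gt_eqF.
- by rewrite uw cabs2R sqrt1_sub_sqr_corr; congr (_ ^+ 2); field; rewrite gt_eqF.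
Qed.

End TwoEqualNormVectors.

Lemma vnorm2_steer (R : realType) (M : nat) (s : R) : vnorm2 (steer M s) = M%:R.
Proof.
rewrite /vnorm2 (eq_bigr (fun=> 1)) ?sumr_const ?card_ord // => i _.
by rewrite mxE cabs2_expj.
Qed.

Lemma snrE (R : realType) (M : nat) (x H beta0 phi sigma2 : R) (w : 'cV[R[i]]_M) :
  0 <= beta0 -> snr x H beta0 phi sigma2 w =
  beta0 / (sigma2 * (x ^+ 2 + H ^+ 2)) * cabs2 (dotH (a_u M x H) w).
Proof.
move=> beta0_ge0; have du_ge0 : 0 <= x ^+ 2 + H ^+ 2 by rewrite addr_ge0 ?sqr_ge0.
rewrite /snr /h_c dotHZl cabs2M cabs2J cabs2M cabs2R cabs2_expj mulr1.
by rewrite sqr_sqrtr ?divr_ge0 // mulrAC invfM [sigma2^-1 * _]mulrC mulrA.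
Qed.

Lemma rhoE (R : realType) (M : nat) (x H D : R) :
  rho M x H D = modc (dotH (a_v M x H D) (a_u M x H)) / M%:R.
Proof.
by rewrite /rho -dotHJ cabs2J !vnorm2_steer -expr2 sqr_sqrtr ?ler0n.
Qed.

Lemma gamma_starE (R : realType) (M : nat) (x H D beta0 sigma2 Pmax Gam : R) :
  0 < (D - x) ^+ 2 + H ^+ 2 -> 0 <= Gam ->
  gamma_star M x H D beta0 sigma2 Pmax Gam =
  beta0 / (sigma2 * (x ^+ 2 + H ^+ 2)) *
  beam_gain M%:R Pmax (Gam * ((D - x) ^+ 2 + H ^+ 2)) (rho M x H D).
Proof.
rewrite /gamma_star /beam_gain.
set dv := (D - x) ^+ 2 + H ^+ 2; set du := x ^+ 2 + H ^+ 2.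
set r := rho M x H D; set s := Num.sqrt (1 - r ^+ 2) => dv_gt0 Gam_ge0.
rewrite ler_pdivlMr // invfM; case: ifP => _; first ring.
have -> : Num.sqrt (M%:R * Pmax - Gam * dv) = Num.sqrt dv * Num.sqrt (M%:R * Pmax / dv - Gam).
  by rewrite -sqrtrM ?ltW //; congr Num.sqrt; field; rewrite gt_eqF.
rewrite sqrtrM // -[X in _ * X * _ ^+ 2 / _](sqr_sqrtr (ltW dv_gt0)); ring.
Qed.

Theorem proposition1 (R : realType) (M : nat) (H D x beta0 sigma2 Pmax Gam phi : R) :
  (0 < M)%N -> 0 < H -> 0 < D -> 0 < beta0 -> 0 < sigma2 -> 0 < Pmax -> 0 < Gam ->
  M%:R * Pmax / ((D - x) ^+ 2 + H ^+ 2) >= Gam ->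
  (exists w : 'cV[R[i]]_M, feasible x H D Gam Pmax w /\
     snr x H beta0 phi sigma2 w = gamma_star M x H D beta0 sigma2 Pmax Gam) /\
  (forall w : 'cV[R[i]]_M, feasible x H D Gam Pmax w ->
     snr x H beta0 phi sigma2 w <= gamma_star M x H D beta0 sigma2 Pmax Gam).
Proof.
move=> M_gt0 H_gt0 _ beta0_gt0 sigma2_gt0 _ Gam_gt0.
have beta0_ge0 := ltW beta0_gt0.
have dv_gt0 : 0 < (D - x) ^+ 2 + H ^+ 2 by rewrite ltr_wpDl ?sqr_ge0 ?exprn_gt0.
have du_gt0 : 0 < x ^+ 2 + H ^+ 2 by rewrite ltr_wpDl ?sqr_ge0 ?exprn_gt0.
rewrite ler_pdivlMr // => G_le.
have N_gt0 : 0 < M%:R :> R by rewrite ltr0n.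
have G_ge0 : 0 <= Gam * ((D - x) ^+ 2 + H ^+ 2) by rewrite mulr_ge0 ?ltW.
have c_gt0 : 0 < beta0 / (sigma2 * (x ^+ 2 + H ^+ 2)) by rewrite divr_gt0 ?mulr_gt0.
have u_norm : vnorm2 (a_u M x H) = M%:R := vnorm2_steer _ _.
have v_norm : vnorm2 (a_v M x H D) = M%:R := vnorm2_steer _ _.
rewrite /feasible gamma_starE ?ltW // rhoE; split.
  have [w [vw wP uw]] := beam_gain_attained N_gt0 u_norm v_norm G_ge0 G_le.
  by exists w; rewrite ler_pdivlMr // snrE // uw.
move=> w []; rewrite ler_pdivlMr // => vw wP.
by rewrite snrE // ler_pM2l //; apply: beam_gain_ub.
Qed.
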